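(* Let $q=p^{m_0}$ with $p$ prime and let $\rho$ be a permutation of $\{0,1,2,\ldots\}$. Let $n,m$ be nonnegative integers and $y\in\mathbb{Z}_p$. Set $$s_1:=\sum_{k=0}^{m}\binom{m+n-k}{k,\,m-k,\,n-k}\binom{y}{\rho_\ast(m+n-k)},$$ $$s_2:=\sum_{k=0}^{\rho_\ast m}\binom{\rho_\ast m+\rho_\ast n-k}{k,\,\rho_\ast m-k,\,\rho_\ast n-k}\binom{y}{\rho_\ast m+\rho_\ast n-k}.$$ Then $s_1\equiv s_2\pmod{p}$ in $\mathbb{Z}_p$.
   Context: For $y\in\mathbb{Z}_p$ written $q$-adically as $y=\sum_{j\ge0}c_jq^j$ with $0\le c_j<q$, set $\rho_\ast y:=\sum_{j\ge0}c_jq^{\rho(j)}$; it maps nonnegative integers to nonnegative integers. For $y\in\mathbb{Z}_p$ and an integer $j\ge0$, $\binom{y}{j}=y(y-1)\cdots(y-j+1)/j!\in\mathbb{Z}_p$. The multinomial coefficient $\binom{N}{a,b,c}$ with $a+b+c=N$ denotes $N!/(a!\,b!\,c!)$, taken to be $0$ if any of $a,b,c$ is negative. *)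

From mathcomp Require Import all_boot all_order all_algebra.
Set Implicit Arguments. Unset Strict Implicit. Unset Printing Implicit Defensive.
Import Order.TTheory GRing.Theory Num.Theory.
Local Open Scope ring_scope.

(* p-adic integers Z_p = lim Z/p^k, represented by coherent sequences of
   integer representatives x k of (x mod p^k); two sequences represent the
   same p-adic integer iff they agree mod p^k at every level k. *)
Definition is_zp (p : nat) (x : nat -> int) : Prop :=
  forall k : nat, (x k.+1 = x k %[mod (p ^ k)%N%:Z])%Z.

Definition zp_eqv (p : nat) (x y : nat -> int) : Prop :=
  forall k : nat, (x k = y k %[mod (p ^ k)%N%:Z])%Z.

(* z represents binom(y, j) = y(y-1)...(y-j+1)/j! in Z_p, i.e.
   z is a p-adic integer with j! * z = y(y-1)...(y-j+1) in Z_p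
   (this determines z uniquely since Z_p is torsion-free). *)
Definition is_binom_zp (p : nat) (y : nat -> int) (j : nat) (z : nat -> int) : Prop :=
  is_zp p z /\
  zp_eqv p (fun k => (j`!)%:Z * z k) (fun k => \prod_(i < j) (y k - i%:Z)).

(* rho_* on nonnegative integers: permute the base-q digit positions.
   For q >= 2, the digits of y at positions >= y are zero. *)
Definition rho_star (q : nat) (rho : nat -> nat) (y : nat) : nat :=
  (\sum_(j < y.+1) (y %/ q ^ j %% q) * q ^ (rho j))%N.

Definition multinom (N : nat) (a b c : int) : nat :=
  match a, b, c with
  | Posz a', Posz b', Posz c' =>
      if (a' + b' + c' == N)%N then (N`! %/ (a'`! * b'`! * c'`!))%N else 0%N
  | _, _, _ => 0%N
  end.

(* Each B j is congruent mod p to 'C(Y, j)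
   for a single natural number Y, a representative of y modulo a large power
   of p.  By Lucas' theorem in base q = p ^ m0, 'C(Y, rho_* N) = 'C(Z, N) mod p,
   where Z is Y with its base-q digits permuted back by rho.  The identity
   'C(x, m) 'C(x, n) = sum_k multinom(m+n-k; k, m-k, n-k) 'C(x, m+n-k)
   turns s1 into 'C(Z, m) 'C(Z, n) = 'C(Y, rho_* m) 'C(Y, rho_* n), and then
   the same identity with x = Y turns this product into s2. *)

From mathcomp Require Import all_boot all_order all_algebra.
From mathcomp Require Import ring zify.
Import Order.TTheory GRing.Theory.

Lemma mul_bin_sub x m j : 'C(x, m) * 'C(x - m, j) = 'C(x, m + j) * 'C(m + j, m).
Proof.
have [ltxm | lemx] := ltnP x m.
  by rewrite (bin_small ltxm) (@bin_small x (m + j)) ?mul0n //; lia.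
have [ltx_mj | lemj] := ltnP x (m + j).
  by rewrite (bin_small ltx_mj) (@bin_small (x - m) j) ?muln0 ?mul0n //; lia.
apply/eqP; rewrite -(eqn_pmul2r (_ : 0 < m`! * j`! * (x - (m + j))`!)); last first.
  by rewrite !muln_gt0 !fact_gt0.
have := @bin_fact (x - m) j; rewrite -subnDA => fact_xm_j.
have := bin_fact (leq_addr j m); rewrite addKn => fact_mj.
rewrite [X in X == _](_ : _ =
  'C(x, m) * (m`! * ('C(x - m, j) * (j`! * (x - (m + j))`!)))); last by ring.
rewrite [X in _ == X](_ : _ =
  'C(x, m + j) * ('C(m + j, m) * (m`! * j`!) * (x - (m + j))`!)); last by ring.
by rewrite fact_xm_j ?fact_mj ?bin_fact //; lia.
Qed.

Lemma multinom_bin m n k : k <= m ->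
  multinom (m + n - k) k (m%:Z - k%:Z)%R (n%:Z - k%:Z)%R
    = (k <= n) * ('C(m, k) * 'C(m + n - k, m)).
Proof.
move=> lekm; rewrite /multinom subzn //.
have [lekn | ltnk] := leqP k n; last first.
  have -> : (n%:Z - k%:Z)%R = Negz (k - n).-1.
    by rewrite NegzE prednK ?subn_gt0 // -opprB subzn // ltnW.
  by [].
rewrite subzn // ifT; last by apply/eqP; lia.
apply/eqP; rewrite mul1n eq_sym -(eqn_pmul2r (_ : 0 < k`! * (m - k)`! * (n - k)`!)); last first.
  by rewrite !muln_gt0 !fact_gt0.
have := bin_fact (leq_addr (n - k) m); rewrite addKn -addnBA // => fact_mnk.
have fact_mk := bin_fact lekm.
set d := m - k; set e := n - k in fact_mnk *.
rewrite divnK; last first.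
  by apply/dvdnP; exists ('C(m + e, m) * 'C(m, k)); rewrite -fact_mnk -fact_mk; ring.
by rewrite -fact_mnk -fact_mk; apply/eqP; ring.
Qed.

Lemma bin_mul_multinom x m n : 'C(x, m) * 'C(x, n)
  = \sum_(k < m.+1)
      multinom (m + n - k) k (m%:Z - k%:Z)%R (n%:Z - k%:Z)%R * 'C(x, m + n - k).
Proof.
under eq_bigr => k _ do rewrite (multinom_bin m n k (ltn_ord k)).
pose G k := 'C(m, k) * 'C(m + n - k, m) * 'C(x, m + n - k).
have [ltxm | lemx] := ltnP x m.
  rewrite bin_small // mul0n big1 // => k _.
  have [lekn | _] := leqP k n; last by [].
  by rewrite (@bin_small x) ?muln0 //; lia.
have -> : 'C(x, m) * 'C(x, n) = \sum_(k < n.+1) G k.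
  rewrite -{2}(subnKC lemx) -binomial.Vandermonde big_distrr; apply: eq_bigr => k _.
  rewrite /= mulnCA mul_bin_sub (addnBA m (ltn_ord k : k <= n)).
  by rewrite [_ * 'C(_, m)]mulnC mulnA.
have le_mn : n.+1 <= (m + n).+1 by rewrite ltnS leq_addl.
have le_nm : m.+1 <= (m + n).+1 by rewrite ltnS leq_addr.
rewrite [RHS](eq_bigr (fun k : 'I_m.+1 => (k <= n) * G k)) => [|k _]; last first.
  by rewrite /G -mulnA.
rewrite (@big_ord_widen _ 0 addn _ _ G le_mn).
rewrite (@big_ord_widen _ 0 addn _ _ (fun k => (k <= n) * G k) le_nm).
rewrite big_mkcond [RHS]big_mkcond /=; apply: eq_bigr => k _.
rewrite !ltnS; case: (leqP k m) => [_ | ltmk].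
  by case: (k <= n); rewrite /= ?mul1n ?mul0n.
by rewrite /G (bin_small ltmk) !mul0n; case: (k <= n); rewrite /= ?mul0n.
Qed.

Local Open Scope ring_scope.

Lemma coefXD1n (R : nzRingType) (n i : nat) :
  (('X + 1 : {poly R}) ^+ n)`_i = 'C(n, i)%:R.
Proof.
elim: n i => [|n IHn] [|i]; rewrite ?expr0 ?coefC ?bin0 //.
  by rewrite exprSr mulrDr mulr1 coefD coefMX !IHn bin0 add0r.
by rewrite exprSr mulrDr mulr1 coefD coefMX !IHn binS natrD addrC.
Qed.

Definition digit (q X j : nat) : nat := (X %/ q ^ j %% q)%N.

Lemma digit_lt q X j : (0 < q)%N -> (digit q X j < q)%N.
Proof. exact: ltn_pmod. Qed.

Lemma digit_small q X j : (X < q ^ j)%N -> digit q X j = 0%N.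
Proof. by move=> ltXq; rewrite /digit divn_small ?mod0n. Qed.

Lemma sum_digits q J X : (0 < q)%N -> (X < q ^ J)%N ->
  (\sum_(j < J) digit q X j * q ^ j)%N = X.
Proof.
move=> q_gt0; elim: J X => [|J IHJ] X ltXq; first by rewrite big_ord0; case: X ltXq.
rewrite big_ord_recl /digit expn0 divn1 muln1 [RHS](divn_eq X q) addnC.
congr (_ + _)%N; rewrite -[(X %/ q)%N]IHJ ?ltn_divLR -?expnSr // big_distrl.
apply: eq_bigr => j _.
by rewrite /= /digit /bump add1n expnS -divnMA mulnCA mulnC.
Qed.

Lemma rho_star_widen q rho N J : (1 < q)%N -> (N < J)%N ->
  rho_star q rho N = (\sum_(j < J) digit q N j * q ^ rho j)%N.
Proof.
move=> q_gt1 ltNJ.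
transitivity (\sum_(j < N.+1) digit q N j * q ^ rho j)%N; first by [].
rewrite (big_ord_widen J (fun j => digit q N j * q ^ rho j)%N ltNJ) big_mkcond.
apply: eq_bigr => j _; case: ifPn => // /negbTE ltjN.
have ltNj : (N < j)%N by rewrite ltnNge -ltnS ltjN.
rewrite digit_small ?mul0n //.
exact: leq_trans (ltn_expl N q_gt1) (leq_pexp2l (ltnW q_gt1) (ltnW ltNj)).
Qed.

Lemma ord_fiber_inj J (rho : nat -> nat) i : injective rho ->
  (exists j0 : 'I_J, (fun j : 'I_J => rho j == i) =1 pred1 j0)
  \/ (fun j : 'I_J => rho j == i) =1 pred0.
Proof.
move=> rho_inj; case: (pickP (fun j : 'I_J => rho j == i)) => [j0 /eqP rhoj0 | no_j].
  by left; exists j0 => j /=; rewrite -rhoj0 inj_eq.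
by right.
Qed.

Lemma big_ord_fibers (R : Type) (idx : R) (op : Monoid.com_law idx) J I
    (rho : nat -> nat) (F : nat -> nat -> R) :
  (forall j, (j < J)%N -> (rho j < I)%N) ->
  \big[op/idx]_(i < I) \big[op/idx]_(j < J | rho j == i) F i j
    = \big[op/idx]_(j < J) F (rho j) j.
Proof.
move=> rho_lt; under eq_bigr => i _ do rewrite big_mkcond.
rewrite exchange_big /=; apply: eq_bigr => j _; rewrite -big_mkcond /=.
by rewrite (big_pred1 (Ordinal (rho_lt j (ltn_ord j)))) // => i /=; rewrite eq_sym.
Qed.

Section Lucas.

Variables (R : comNzRingType) (p : nat).
Hypothesis pcharRp : p \in [pchar R].

Let pexpn_gt1 e : (0 < e)%N -> (1 < p ^ e)%N.
Proof.
by move=> e_gt0; rewrite -(expn0 p) ltn_exp2l // prime_gt1 // (pcharf_prime pcharRp).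
Qed.

Lemma exprXD1n_pchar e : ('X + 1 : {poly R}) ^+ (p ^ e) = 'X^(p ^ e) + 1.
Proof.
have pcharPp : p \in [pchar {poly R}] by rewrite pchar_poly.
rewrite exprDn_pchar ?expr1n // (eq_pnat _ (pcharf_eq pcharPp)) pnatX pnat_id //.
exact: pcharf_prime pcharRp.
Qed.

Lemma coef_XnMXD1n_digits q i b r s : (r < q)%N -> (s < q)%N ->
  ('X^(i * q) * ('X + 1 : {poly R}) ^+ r)`_(b * q + s)
    = if i == b then 'C(r, s)%:R else 0.
Proof.
move=> ltrq ltsq; rewrite coefXnM.
have [-> | neq_ib] := eqVneq i b; first by rewrite ltnNge leq_addr addKn coefXD1n.
case: ifP => // /negbT ge_bqs_iq; rewrite coefXD1n bin_small //.
case: (ltngtP i b) neq_ib => // [lt_ib | lt_bi] _.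
  have : (i.+1 * q <= b * q)%N by rewrite leq_mul2r lt_ib orbT.
  by rewrite mulSn; lia.
have : (b.+1 * q <= i * q)%N by rewrite leq_mul2r lt_bi orbT.
by rewrite mulSn; lia.
Qed.

Lemma bin_lucas e a b r s : (r < p ^ e)%N -> (s < p ^ e)%N ->
  'C(a * p ^ e + r, b * p ^ e + s)%:R = ('C(a, b) * 'C(r, s))%:R :> R.
Proof.
move=> ltrq ltsq; rewrite -coefXD1n exprD mulnC exprM exprXD1n_pchar exprD1n.
rewrite mulr_suml coef_sum.
under eq_bigr => i _ do
  rewrite mulrnAl coefMn -exprM mulnC coef_XnMXD1n_digits //
          (fun_if (fun x : R => x *+ _)) mul0rn.
rewrite -big_mkcond (big_ord1_eq _ (fun i => 'C(r, s)%:R *+ 'C(a, i))) ltnS.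
by case: leqP => [_ | lt_ab]; rewrite ?(bin_small lt_ab) natrM mulr_natl.
Qed.

Lemma bin_lucas_digits e I (x n : nat -> nat) :
  (forall i, x i < p ^ e)%N -> (forall i, n i < p ^ e)%N ->
  'C(\sum_(i < I) x i * (p ^ e) ^ i, \sum_(i < I) n i * (p ^ e) ^ i)%:R
    = \prod_(i < I) 'C(x i, n i)%:R :> R.
Proof.
elim: I x n => [|I IHI] x n ltxq ltnq; first by rewrite !big_ord0 bin0.
have shift (f : nat -> nat) : (\sum_(i < I.+1) f i * (p ^ e) ^ i
    = (\sum_(i < I) f i.+1 * (p ^ e) ^ i) * p ^ e + f 0%N)%N.
  rewrite big_ord_recl big_distrl addnC /= expn0 muln1; congr (_ + _)%N.
  by apply: eq_bigr => i _; rewrite expnS mulnCA mulnC.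
rewrite !shift bin_lucas // natrM mulrC big_ord_recl.
by rewrite (IHI (fun i => x i.+1) (fun i => n i.+1)).
Qed.

Lemma bin_rho_star e (rho : nat -> nat) Y N J I : (0 < e)%N -> injective rho ->
  (N < J)%N -> (forall j, (j < J)%N -> (rho j < I)%N) -> (Y < (p ^ e) ^ I)%N ->
  'C(Y, rho_star (p ^ e) rho N)%:R
    = 'C(\sum_(j < J) digit (p ^ e) Y (rho j) * (p ^ e) ^ j, N)%:R :> R.
Proof.
move=> e_gt0 rho_inj ltNJ rho_lt ltYq; set q := (p ^ e)%N.
have q_gt1 : (1 < q)%N by exact: pexpn_gt1.
have q_gt0 := ltnW q_gt1.
pose n i := (\sum_(j < J | rho j == i) digit q N j)%N.
have ltnq i : (n i < q)%N.
  have [[j0 fiber_j0] | fiber0] := ord_fiber_inj J rho i rho_inj.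
    by rewrite /n (big_pred1 j0 fiber_j0) digit_lt.
  by rewrite /n big_pred0.
have bin_n x i : 'C(x, n i) = (\prod_(j < J | rho j == i) 'C(x, digit q N j))%N.
  have [[j0 fiber_j0] | fiber0] := ord_fiber_inj J rho i rho_inj.
    by rewrite /n !(big_pred1 j0 fiber_j0).
  by rewrite /n !big_pred0 ?bin0.
have rhoN : rho_star q rho N = (\sum_(i < I) n i * q ^ i)%N.
  rewrite (@rho_star_widen q rho N J q_gt1 ltNJ).
  rewrite -(@big_ord_fibers _ _ addn J I rho (fun i j => digit q N j * q ^ i)%N rho_lt).
  by apply: eq_bigr => i _; rewrite big_distrl.
have ltNqJ : (N < q ^ J)%N.
  exact: leq_trans (ltn_expl N q_gt1) (leq_pexp2l q_gt0 (ltnW ltNJ)).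
rewrite rhoN -{1}(@sum_digits q I Y q_gt0 ltYq) bin_lucas_digits //;
  last by move=> i; exact: digit_lt.
rewrite -[in RHS](@sum_digits q J N q_gt0 ltNqJ).
rewrite (bin_lucas_digits e J (fun j => digit q Y (rho j)) (digit q N));
  try by move=> j; exact: digit_lt.
rewrite -!natr_prod; congr (_%:R).
under eq_bigr => i _ do rewrite bin_n.
exact: (@big_ord_fibers _ _ muln J I rho
  (fun i j => 'C(digit q Y i, digit q N j)) rho_lt).
Qed.

Lemma exists_bin_rho_star e (rho : nat -> nat) Y J : (0 < e)%N -> injective rho ->
  exists Z, forall N, (N < J)%N ->
    'C(Y, rho_star (p ^ e) rho N)%:R = 'C(Z, N)%:R :> R.
Proof.
move=> e_gt0 rho_inj; set I := ((\max_(j < J) rho j).+1 + Y)%N.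
exists (\sum_(j < J) digit (p ^ e) Y (rho j) * (p ^ e) ^ j)%N => N ltNJ.
apply: (bin_rho_star e rho Y N J I) => // [j ltjJ | ].
  by apply: ltn_addr; rewrite ltnS (leq_bigmax (Ordinal ltjJ)).
have q_gt1 := pexpn_gt1 e e_gt0.
exact: leq_trans (ltn_expl Y q_gt1) (leq_pexp2l (ltnW q_gt1) (leq_addl _ _)).
Qed.

End Lucas.

Lemma is_zp_dvdz p (x : nat -> int) k l : is_zp p x -> (k <= l)%N ->
  ((p ^ k)%N%:Z %| x l - x k)%Z.
Proof.
move=> x_zp; elim: l => [|l IHl]; first by rewrite leqn0 => /eqP ->; rewrite subrr dvdz0.
rewrite leq_eqVlt => /predU1P [<- | ltkl]; first by rewrite subrr dvdz0.
rewrite -(subrK (x l) (x l.+1)) -addrA rpredD ?IHl //.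
have := x_zp l; move/eqP; rewrite eqz_mod_dvd; apply: dvdz_trans.
by rewrite dvdzE /= dvdn_exp2l.
Qed.

Lemma dvdz_ffactB (d a b : int) j : (d %| a - b)%Z ->
  (d %| \prod_(i < j) (a - i%:Z) - \prod_(i < j) (b - i%:Z))%Z.
Proof.
move=> dvd_d_ab; elim: j => [|j IHj]; first by rewrite !big_ord0 subrr dvdz0.
rewrite !big_ord_recr /=; set A := \prod_(i < j) _; set B := \prod_(i < j) _.
have -> : A * (a - j%:Z) - B * (b - j%:Z) = (A - B) * (a - j%:Z) + B * (a - b) by ring.
by apply: rpredD; [apply: dvdz_mulr | apply: dvdz_mull].
Qed.

Lemma prodz_ffact (Y j : nat) : \prod_(i < j) (Y%:Z - i%:Z) = (Y ^_ j)%N%:Z.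
Proof.
elim: j => [|j IHj]; first by rewrite big_ord0.
rewrite big_ord_recr /= IHj ffactnSr.
have [lejY | ltYj] := leqP j Y; first by rewrite PoszM subzn.
by rewrite ffact_small // mul0r.
Qed.

Lemma pexpn_dvdz_mul p K g (D : int) : prime p -> (0 < g)%N -> (g <= K)%N ->
  ((p ^ K)%N%:Z %| g%:Z * D)%Z -> (p%:Z %| D)%Z.
Proof.
move=> p_pr g_gt0 leqK; have [-> | D_neq0] := eqVneq D 0; first by rewrite dvdz0.
have D_gt0 : (0 < `|D|)%N by rewrite absz_gt0.
rewrite !dvdzE abszM /= pfactor_dvdn ?muln_gt0 ?g_gt0 // lognM //.
rewrite -[X in (X %| _)%N](expn1 p) pfactor_dvdn //.
have : (logn p g < g)%N.
  exact: leq_trans (ltn_expl _ (prime_gt1 p_pr)) (dvdn_leq g_gt0 (pfactor_dvdnn p g)).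
lia.
Qed.

Lemma eqz_mod_Fp p (x y : int) : prime p ->
  (x == y %[mod p%:Z])%Z = (x%:~R == y%:~R :> 'F_p).
Proof. by move=> p_pr; rewrite eqz_mod_dvd (dvdz_pcharf (pchar_Fp p_pr)) mulrzBr subr_eq0. Qed.

Lemma binom_zp_mod_p p (y z : nat -> int) j K (Y : nat) : prime p ->
  is_binom_zp p y j z -> (j`! <= K)%N -> ((p ^ K)%N%:Z %| y K - Y%:Z)%Z ->
  (z 1%N)%:~R = 'C(Y, j)%:R :> 'F_p.
Proof.
move=> p_pr [z_zp z_binom] le_fact_K yK_Y.
have K_gt0 : (0 < K)%N := leq_trans (fact_gt0 j) le_fact_K.
have zK_Y : (p%:Z %| z K - 'C(Y, j)%:Z)%Z.
  apply: (@pexpn_dvdz_mul p K j`! _ p_pr (fact_gt0 j) le_fact_K).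
  have := z_binom K; move/eqP; rewrite eqz_mod_dvd => dvd_zK.
  rewrite mulrBr -PoszM mulnC bin_ffact -prodz_ffact.
  rewrite -(subrK (\prod_(i < j) (y K - i%:Z)) (_ * z K)) -addrA.
  by rewrite rpredD // dvdz_ffactB.
have := @is_zp_dvdz p z 1 K z_zp K_gt0; rewrite expn1 => z1_zK.
have : (p%:Z %| z 1%N - 'C(Y, j)%:Z)%Z.
  by rewrite -(subrK (z K) (z 1%N)) -addrA -opprB rpredD ?rpredN.
by rewrite -eqz_mod_dvd eqz_mod_Fp // => /eqP.
Qed.

Lemma exists_binom_zp_mod_p p (y : nat -> int) (B : nat -> nat -> int) W :
  prime p -> (forall j, is_binom_zp p y j (B j)) ->
  exists Y, forall j, (j < W)%N -> (B j 1%N)%:~R = 'C(Y, j)%:R :> 'F_p.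
Proof.
move=> p_pr B_binom; set K := W`!; set d := (p ^ K)%N%:Z.
have d_neq0 : d != 0 by rewrite gt_eqF // ltz_nat expn_gt0 prime_gt0.
exists `|(y K %% d)%Z|%N => j ltjW.
apply: binom_zp_mod_p (B_binom j) (leq_fact (ltnW ltjW)) _ => //.
rewrite gez0_abs ?modz_ge0 // {1}(divz_eq (y K) d) addrK.
exact: dvdz_mull.
Qed.

Theorem proposition7p5 (p m0 : nat) (rho : nat -> nat) (n m : nat)
    (y : nat -> int) (B : nat -> nat -> int) :
  prime p -> (0 < m0)%N -> bijective rho ->
  is_zp p y ->
  (forall j : nat, is_binom_zp p y j (B j)) ->
  let q := (p ^ m0)%N in
  let s1 := fun i : nat =>
    \sum_(k < m.+1)
      (multinom (m + n - k) k (m%:Z - k%:Z) (n%:Z - k%:Z))%:Z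
        * B (rho_star q rho (m + n - k)%N) i in
  let s2 := fun i : nat =>
    \sum_(k < (rho_star q rho m).+1)
      (multinom (rho_star q rho m + rho_star q rho n - k) k
         ((rho_star q rho m)%:Z - k%:Z) ((rho_star q rho n)%:Z - k%:Z))%:Z
        * B (rho_star q rho m + rho_star q rho n - k)%N i in
  (s1 1%N = s2 1%N %[mod p%:Z])%Z.
Proof.
move=> p_pr m0_gt0 /bij_inj rho_inj _ B_binom q s1 s2.
apply/eqP; rewrite eqz_mod_Fp //; apply/eqP; rewrite /s1 /s2 !mulrz_sumr.
set a := rho_star q rho m; set b := rho_star q rho n.
have le_max N : (N <= m + n)%N ->
    (rho_star q rho N <= \max_(N' < (m + n).+1) rho_star q rho N')%N.
  by move=> leN; apply: (leq_bigmax (Ordinal (leN : (N < (m + n).+1)%N))).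
set W := (\max_(N < (m + n).+1) rho_star q rho N + (a + b)).+1%N.
have rho_star_ltW N : (N <= m + n)%N -> (rho_star q rho N < W)%N.
  by move=> /le_max; rewrite /W; lia.
have ab_ltW k : (a + b - k < W)%N by rewrite /W; lia.
have [Y BY] := @exists_binom_zp_mod_p p y B W p_pr B_binom.
have [Z YZ] :=
  @exists_bin_rho_star _ p (pchar_Fp p_pr) m0 rho Y (m + n).+1 m0_gt0 rho_inj.
transitivity (('C(Z, m) * 'C(Z, n))%:R : 'F_p).
  rewrite bin_mul_multinom natr_sum; apply: eq_bigr => k _.
  by rewrite intrM BY ?rho_star_ltW ?leq_subr // YZ ?ltnS ?leq_subr // natrM.
rewrite natrM -!YZ ?ltnS ?leq_addr ?leq_addl // -natrM bin_mul_multinom natr_sum.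
by apply: eq_bigr => k _; rewrite intrM BY // natrM.
Qed.
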